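(* For $n\in\{0,1,2,\dots\}$ and real $\Lambda$ with $\Lambda<j_{n,1}^2$, set \[ \sigma^{(\Lambda)}_{(n)}:=\begin{cases}\dfrac{\sqrt{-\Lambda}\,I_n'(\sqrt{-\Lambda})}{I_n(\sqrt{-\Lambda})},&\Lambda<0,\\ n,&\Lambda=0,\\ \dfrac{\sqrt{\Lambda}\,J_n'(\sqrt{\Lambda})}{J_n(\sqrt{\Lambda})},&\Lambda>0.\end{cases} \] Let $0\le n<m$ be integers. Then $\sigma^{(\Lambda)}_{(n)}<\sigma^{(\Lambda)}_{(m)}$ for all $\Lambda<j_{n,1}^2$. Consequently, for all $\Lambda<j_{0,1}^2=\lambda^{\mathrm{Dir}}_1(\mathbb{D})$ the eigenvalues of the Dirichlet-to-Neumann map $\mathcal{D}_\Lambda$ of the unit disk $\mathbb{D}$, listed in non-decreasing order with multiplicity, are $\sigma^{(\Lambda)}_k=\sigma^{(\Lambda)}_{(\lfloor (k+1)/2\rfloor)}$, $k\in\mathbb{N}$.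
   Context: $J_n$ and $I_n$ are the Bessel and modified Bessel functions of the first kind of order $n$; $j_{n,1}$ is the first positive zero of $J_n$, and $j_{n,1}<j_{m,1}$ for $n<m$. For the unit disk $\mathbb{D}\subset\mathbb{R}^2$ and $\Lambda$ not a Dirichlet eigenvalue, the Dirichlet-to-Neumann map $\mathcal{D}_\Lambda$ ($u\mapsto\partial_nU$ with $-\Delta U=\Lambda U$ in $\mathbb{D}$, $U|_{\partial\mathbb{D}}=u$) has eigenvalues $\sigma^{(\Lambda)}_{(0)}$ (simple, constant eigenfunction) and $\sigma^{(\Lambda)}_{(n)}$, $n\ge1$ (double, eigenfunctions $\cos n\theta,\sin n\theta$). *)

From Stdlib Require Import Reals Lra.
From Coquelicot Require Import Coquelicot.
Open Scope R_scope.

Definition BesselJ (n : nat) (x : R) : R :=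
  Series (fun k : nat =>
    (-1) ^ k / (INR (Factorial.fact k) * INR (Factorial.fact (n + k))) * (x / 2) ^ (2 * k + n)).

Definition BesselI (n : nat) (x : R) : R :=
  Series (fun k : nat =>
    / (INR (Factorial.fact k) * INR (Factorial.fact (n + k))) * (x / 2) ^ (2 * k + n)).

Definition is_first_zero_J (n : nat) (j : R) : Prop :=
  0 < j /\ BesselJ n j = 0 /\ (forall x, 0 < x < j -> BesselJ n x <> 0).

Definition sigma_n (n : nat) (L : R) : R :=
  match total_order_T L 0 with
  | inleft (left _) =>
      sqrt (- L) * Derive (BesselI n) (sqrt (- L)) / BesselI n (sqrt (- L))
  | inleft (right _) => INR n
  | inright _ =>
      sqrt L * Derive (BesselJ n) (sqrt L) / BesselJ n (sqrt L)
  end.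

(* Eigenvalues of the DtN map of the unit disk, labelled by their eigenfunctions:
   label (0,false) <-> constant; (n,false) <-> cos n theta, (n,true) <-> sin n theta, n >= 1. *)
Definition dtn_label_valid (l : nat * bool) : Prop := fst l = 0%nat -> snd l = false.
Definition dtn_eig (L : R) (l : nat * bool) : R := sigma_n (fst l) L.

Definition lists_dtn_eigenvalues (L : R) (s : nat -> R) : Prop :=
  (forall k, s k <= s (S k)) /\
  exists f : nat -> nat * bool,
    (forall k, dtn_label_valid (f k)) /\
    (forall k1 k2, f k1 = f k2 -> k1 = k2) /\
    (forall l, dtn_label_valid l -> exists k, f k = l) /\
    (forall k, s k = dtn_eig L (f k)).

From Stdlib Require Import Bool Reals Lra Lia.
From Coquelicot Require Import Coquelicot.
Open Scope R_scope.

(* Write [J_n(x) = (x/2)^n F_n(x^2/4)] and [I_n(x) = (x/2)^n F_n(-x^2/4)] with the entire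
   function [F_n(z) = sum_k (-z)^k / (k! (n+k)!)]. Then all three branches of [sigma_(n)(L)]
   equal [n + 2 z F_n'(z) / F_n(z)] at [z = L/4], so
   [sigma_(m) - sigma_(n) = G(z) / (F_m F_n)] with
   [G = (m - n) F_m F_n + 2 z (F_m' F_n - F_m F_n')].
   Bessel's equation gives [(t^(m+n) G(c t^2))' = (m^2 - n^2) t^(m+n-1) (F_m F_n)(c t^2)], so
   [G(z) > 0] as soon as [F_m F_n > 0] strictly between [0] and [z]. This holds for [z <= 0]
   (the series then has nonnegative terms) and for [0 < z < j_(n,1)^2/4], because [F_m] cannot
   vanish there before [F_n]: at a first zero of [F_m] we would get [G = 2 z F_m' F_n <= 0].
   The listing of the Dirichlet-to-Neumann eigenvalues follows from
   [sigma_(0) < sigma_(1) < sigma_(2) < ...] below [j_(0,1)^2]. *)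

Lemma continuity_pt_pos_near f x : continuity_pt f x -> 0 < f x ->
  exists d, 0 < d /\ forall y, Rabs (y - x) < d -> 0 < f y.
Proof.
  intros Hf Hx; destruct (proj1 (continuity_pt_locally f x) Hf (mkposreal _ Hx)) as [d Hd].
  exists d; split; [apply cond_pos|]; intros y Hy.
  specialize (Hd y Hy); simpl in Hd; apply Rabs_def2 in Hd; lra.
Qed.

Lemma first_zero (f : R -> R) a b : a < b -> continuity f -> 0 < f a -> f b <= 0 ->
  exists c, a < c <= b /\ f c = 0 /\ forall x, a <= x < c -> 0 < f x.
Proof.
  intros Hab Hf Ha Hb.
  set (E := fun y => a <= y <= b /\ forall x, a <= x <= y -> 0 < f x).
  assert (HEa : E a) by (split; [lra|]; intros x Hx; replace x with a by lra; exact Ha).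
  destruct (completeness E) as [c [Hub Hlub]]; [exists b; intros y Hy; apply Hy|now exists a|].
  assert (Hcb : c <= b) by (apply Hlub; intros y Hy; apply Hy).
  assert (Hpos : forall x, a <= x < c -> 0 < f x).
  { intros x Hx; apply Rnot_le_lt; intro Hfx.
    assert (c <= x); [|lra].
    apply Hlub; intros y [Hy Hy']; apply Rnot_lt_le; intro Hxy.
    specialize (Hy' x ltac:(lra)); lra. }
  assert (Hac : a < c).
  { destruct (continuity_pt_pos_near f a (Hf a) Ha) as [d [Hd Hd']].
    assert (HE : E (Rmin (a + d / 2) b)).
    { split; [unfold Rmin; destruct Rle_dec; lra|].
      intros x Hx; apply Hd'; rewrite Rabs_right; unfold Rmin in Hx; destruct Rle_dec; lra. }
    specialize (Hub _ HE); unfold Rmin in Hub; destruct Rle_dec; lra. }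
  exists c; split; [lra|split; [|exact Hpos]].
  destruct (Rtotal_order (f c) 0) as [Hneg|[Hzero|Hcpos]]; [exfalso| exact Hzero|exfalso].
  - destruct (continuity_pt_pos_near (fun x => - f x) c
      (continuity_pt_opp _ _ (Hf c)) ltac:(lra)) as [d [Hd Hd']].
    set (y := Rmax (c - d / 2) a).
    assert (Hy : a <= y < c) by (unfold y, Rmax; destruct Rle_dec; lra).
    specialize (Hd' y); specialize (Hpos y Hy).
    assert (Rabs (y - c) < d) by (rewrite Rabs_left; unfold y, Rmax in *; destruct Rle_dec; lra).
    simpl in Hd'; lra.
  - destruct (continuity_pt_pos_near f c (Hf c) Hcpos) as [d [Hd Hd']].
    assert (Hc : c < b) by (destruct (Req_dec c b); [subst; lra|lra]).
    set (y := Rmin (c + d / 2) b).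
    assert (HE : E y).
    { split; [unfold y, Rmin; destruct Rle_dec; lra|].
      intros x Hx; destruct (Rlt_le_dec x c); [apply Hpos; lra|].
      apply Hd'; rewrite Rabs_right; unfold y, Rmin in Hx; destruct Rle_dec; lra. }
    specialize (Hub y HE); unfold y, Rmin in Hub; destruct Rle_dec; lra.
Qed.

Lemma is_derive_nonpos_left_min g c l r : 0 < r -> is_derive g c l ->
  (forall x, c - r < x < c -> g c < g x) -> l <= 0.
Proof.
  intros Hr Hd Hg; apply is_derive_Reals in Hd.
  apply Rnot_lt_le; intro Hl.
  destruct (Hd l Hl) as [del Hdel].
  set (t := - Rmin (del / 2) (r / 2)).
  assert (Ht : - del < t < 0 /\ - r < t)
    by (pose proof (cond_pos del); unfold t, Rmin; destruct Rle_dec; lra).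
  specialize (Hdel t ltac:(lra) ltac:(rewrite Rabs_left; lra)).
  specialize (Hg (c + t) ltac:(lra)).
  assert (Hq : (g (c + t) - g c) / t < 0) by (apply Rdiv_pos_neg; lra).
  apply Rabs_def2 in Hdel; lra.
Qed.

Definition bessel_coef (n k : nat) : R :=
  (-1) ^ k / (INR (Factorial.fact k) * INR (Factorial.fact (n + k))).

Definition besselF n := PSeries (bessel_coef n).
Definition besselF1 n := PSeries (PS_derive (bessel_coef n)).
Definition besselF2 n := PSeries (PS_derive (PS_derive (bessel_coef n))).

Lemma bessel_coef_S n k :
  bessel_coef n (S k) = - bessel_coef n k / (INR (S k) * INR (S (n + k))).
Proof.
  unfold bessel_coef; rewrite Nat.add_succ_r, !fact_simpl, !mult_INR.
  pose proof (INR_fact_lt_0 k); pose proof (INR_fact_lt_0 (n + k)).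
  pose proof (lt_0_INR (S k) ltac:(lia)); pose proof (lt_0_INR (S (n + k)) ltac:(lia)).
  simpl pow; field; lra.
Qed.

Lemma bessel_coef_neq0 n k : bessel_coef n k <> 0.
Proof.
  unfold bessel_coef.
  pose proof (INR_fact_lt_0 k); pose proof (INR_fact_lt_0 (n + k)).
  apply Rmult_integral_contrapositive_currified.
  - apply pow_nonzero; lra.
  - apply Rinv_neq_0_compat; nra.
Qed.

Lemma CV_radius_bessel_coef n : CV_radius (bessel_coef n) = p_infty.
Proof.
  apply CV_radius_infinite_DAlembert; [apply bessel_coef_neq0|].
  apply is_lim_seq_le_le with (u := fun _ => 0) (w := fun k => / INR (S k)).
  - intro k; rewrite bessel_coef_S.
    pose proof (lt_0_INR (S k) ltac:(lia)); pose proof (le_INR 1 (S (n + k)) ltac:(lia)).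
    pose proof (bessel_coef_neq0 n k).
    replace (- bessel_coef n k / (INR (S k) * INR (S (n + k))) / bessel_coef n k)
      with (- / (INR (S k) * INR (S (n + k)))) by (field; simpl in *; lra).
    rewrite Rabs_Ropp, Rabs_right by (apply Rle_ge, Rlt_le, Rinv_0_lt_compat; simpl in *; nra).
    split; [apply Rlt_le, Rinv_0_lt_compat; simpl in *; nra|].
    apply Rinv_le_contravar; simpl in *; nra.
  - apply is_lim_seq_const.
  - change (Finite 0) with (Rbar_inv p_infty).
    apply is_lim_seq_inv; [|discriminate].
    apply (is_lim_seq_incr_1 INR), is_lim_seq_INR.
Qed.

Lemma bessel_coef_inside n x : Rbar_lt (Rabs x) (CV_radius (bessel_coef n)).
Proof. rewrite CV_radius_bessel_coef; exact I. Qed.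

Lemma is_derive_besselF n z : is_derive (besselF n) z (besselF1 n z).
Proof. apply is_derive_PSeries, bessel_coef_inside. Qed.

Lemma is_derive_besselF1 n z : is_derive (besselF1 n) z (besselF2 n z).
Proof. apply is_derive_PSeries; rewrite CV_radius_derive; apply bessel_coef_inside. Qed.

Lemma continuity_besselF n : continuity (besselF n).
Proof. intro z; apply PSeries_continuity, bessel_coef_inside. Qed.

Lemma bessel_coef_rec n k :
  INR (S k) * INR (S (n + k)) * bessel_coef n (S k) + bessel_coef n k = 0.
Proof.
  rewrite bessel_coef_S.
  pose proof (lt_0_INR (S k) ltac:(lia)); pose proof (lt_0_INR (S (n + k)) ltac:(lia)).
  field; lra.
Qed.

(* Bessel's equation after the substitution [J_n(x) = (x/2)^n F_n(x^2/4)]. *)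
Lemma besselF_ode n z :
  z * besselF2 n z + INR (S n) * besselF1 n z + besselF n z = 0.
Proof.
  unfold besselF, besselF1, besselF2.
  rewrite <- PSeries_incr_1, <- PSeries_scal, <- !PSeries_plus.
  - rewrite <- (PSeries_const_0 z); apply PSeries_ext; intros [|k];
      cbn -[INR bessel_coef]; unfold mult, plus, zero, PS_derive; cbn -[INR bessel_coef].
    + pose proof (bessel_coef_rec n 0) as H; rewrite Nat.add_0_r in H; simpl in H |- *; lra.
    + pose proof (bessel_coef_rec n (S k)) as H.
      rewrite Nat.add_succ_r, !S_INR, plus_INR in H; rewrite !S_INR; lra.
  all: repeat apply ex_pseries_plus; try apply ex_pseries_incr_1;
    try (apply ex_pseries_scal; [apply Rmult_comm|]);
    apply CV_radius_inside; rewrite ?CV_radius_derive; apply bessel_coef_inside.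
Qed.

Lemma BesselJ_besselF n x : BesselJ n x = (x / 2) ^ n * besselF n (x ^ 2 / 4).
Proof.
  unfold BesselJ, besselF, PSeries; rewrite <- Series_scal_l; apply Series_ext; intro k.
  unfold bessel_coef; rewrite pow_add, pow_mult.
  pose proof (INR_fact_lt_0 k); pose proof (INR_fact_lt_0 (n + k)).
  replace ((x / 2) ^ 2) with (x ^ 2 / 4) by field.
  field; lra.
Qed.

Lemma BesselI_besselF n x : BesselI n x = (x / 2) ^ n * besselF n (- (x ^ 2 / 4)).
Proof.
  unfold BesselI, besselF, PSeries; rewrite <- Series_scal_l; apply Series_ext; intro k.
  unfold bessel_coef; rewrite pow_add, pow_mult.
  pose proof (INR_fact_lt_0 k); pose proof (INR_fact_lt_0 (n + k)).
  replace ((x / 2) ^ 2) with (x ^ 2 / 4) by field.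
  replace (- (x ^ 2 / 4)) with (-1 * (x ^ 2 / 4)) by ring.
  rewrite Rpow_mult_distr.
  assert (Hsq : (-1) ^ k * (-1) ^ k = 1).
  { rewrite <- Rpow_mult_distr; replace (-1 * -1) with 1 by ring; apply pow1. }
  transitivity ((-1) ^ k * (-1) ^ k * / (INR (Factorial.fact k) * INR (Factorial.fact (n + k)))
                * (x ^ 2 / 4) ^ k * (x / 2) ^ n).
  - rewrite Hsq; field; lra.
  - field; lra.
Qed.

Lemma besselF_0 n : besselF n 0 = / INR (Factorial.fact n).
Proof.
  unfold besselF; rewrite PSeries_0; unfold bessel_coef; rewrite Nat.add_0_r; simpl.
  field; apply INR_fact_neq_0.
Qed.

Lemma besselF_0_pos n : 0 < besselF n 0.
Proof. rewrite besselF_0; apply Rinv_0_lt_compat, INR_fact_lt_0. Qed.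

Lemma besselF_pos_nonpos n z : z <= 0 -> 0 < besselF n z.
Proof.
  intro Hz.
  assert (Hterm : forall k, 0 <= bessel_coef n k * z ^ k).
  { intro k; unfold bessel_coef.
    pose proof (INR_fact_lt_0 k); pose proof (INR_fact_lt_0 (n + k)).
    replace ((-1) ^ k / (INR (Factorial.fact k) * INR (Factorial.fact (n + k))) * z ^ k)
      with ((- z) ^ k / (INR (Factorial.fact k) * INR (Factorial.fact (n + k))))
      by (replace (- z) with (-1 * z) by ring; rewrite Rpow_mult_distr; field; lra).
    apply Rmult_le_pos; [apply pow_le; lra|apply Rlt_le, Rinv_0_lt_compat; nra]. }
  assert (Hex : ex_series (fun k => bessel_coef n k * z ^ k)).
  { apply ex_pseries_R, CV_radius_inside, bessel_coef_inside. }
  assert (Htail : 0 <= Series (fun k => bessel_coef n (S k) * z ^ S k)).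
  { replace 0 with (Series (fun _ => 0 * 0))
      by (rewrite (Series_scal_l 0 (fun _ => 0)); ring).
    apply Series_le; [intro k; rewrite Rmult_0_l; split; [lra|apply Hterm]|].
    apply (ex_series_incr_1 (fun k => bessel_coef n k * z ^ k)), Hex. }
  pose proof (besselF_0_pos n) as H0; unfold besselF in *; rewrite PSeries_0 in H0.
  unfold PSeries; rewrite Series_incr_1 by exact Hex; rewrite pow_O; lra.
Qed.

Lemma scaled_log_derivative n c (B : R -> R) x :
  (forall y, B y = (y / 2) ^ n * besselF n (c * y ^ 2 / 4)) ->
  x <> 0 -> besselF n (c * x ^ 2 / 4) <> 0 ->
  x * Derive B x / B x
  = INR n + 2 * (c * x ^ 2 / 4) * besselF1 n (c * x ^ 2 / 4) / besselF n (c * x ^ 2 / 4).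
Proof.
  intros HB Hx HF.
  assert (HD : is_derive B x
     (INR n * (x / 2) ^ pred n / 2 * besselF n (c * x ^ 2 / 4)
      + (x / 2) ^ n * (besselF1 n (c * x ^ 2 / 4) * (c * x / 2)))).
  { apply (is_derive_ext (fun y => (y / 2) ^ n * besselF n (c * y ^ 2 / 4))); [intro; auto|].
    pose proof (is_derive_besselF n (c * x ^ 2 / 4)).
    auto_derive; [eexists; eassumption|].
    replace (c * (x * (x * 1)) * / 4) with (c * x ^ 2 / 4) by (unfold Rdiv; ring).
    change (fun y => besselF n y) with (besselF n).
    rewrite (is_derive_unique _ _ _ H); unfold Rdiv.
    set (a := (x * / 2) ^ pred n); set (b := (x * / 2) ^ n); field. }
  rewrite (is_derive_unique _ _ _ HD), HB.
  assert (Hp : (x / 2) ^ n <> 0) by (apply pow_nonzero; lra).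
  set (z := c * x ^ 2 / 4) in *.
  destruct n as [|n]; simpl pred; simpl pow in *.
  - change (INR 0) with 0; unfold z; field; auto.
  - rewrite S_INR; set (q := (x / 2) ^ n) in *.
    unfold z; field; split; [|split]; auto; intro Hq; apply Hp; rewrite Hq; ring.
Qed.

Lemma sigma_n_besselF n L : besselF n (L / 4) <> 0 ->
  sigma_n n L = INR n + 2 * (L / 4) * besselF1 n (L / 4) / besselF n (L / 4).
Proof.
  intro HF; unfold sigma_n; destruct (total_order_T L 0) as [[HL|HL]|HL].
  - assert (Hx : 0 < sqrt (- L)) by (apply sqrt_lt_R0; lra).
    replace (L / 4) with (-1 * sqrt (- L) ^ 2 / 4) in *
      by (rewrite <- Rsqr_pow2, Rsqr_sqrt; lra).
    apply scaled_log_derivative; [|lra|auto].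
    intro y; rewrite BesselI_besselF; repeat f_equal; field.
  - subst L; unfold Rdiv; ring.
  - assert (Hx : 0 < sqrt L) by (apply sqrt_lt_R0; lra).
    replace (L / 4) with (1 * sqrt L ^ 2 / 4) in * by (rewrite <- Rsqr_pow2, Rsqr_sqrt; lra).
    apply scaled_log_derivative; [|lra|auto].
    intro y; rewrite BesselJ_besselF; repeat f_equal; field.
Qed.

Definition sigma_gap m n z :=
  (INR m - INR n) * besselF m z * besselF n z
  + 2 * z * (besselF1 m z * besselF n z - besselF m z * besselF1 n z).

Lemma sigma_n_sub m n L : besselF m (L / 4) <> 0 -> besselF n (L / 4) <> 0 ->
  sigma_n m L - sigma_n n L
  = sigma_gap m n (L / 4) / (besselF m (L / 4) * besselF n (L / 4)).
Proof.
  intros Hm Hn; rewrite !sigma_n_besselF by assumption; unfold sigma_gap; field; auto.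
Qed.

Lemma is_derive_sigma_gap m n z : is_derive (sigma_gap m n) z
  (- (INR m + INR n) * (besselF1 m z * besselF n z - besselF m z * besselF1 n z)).
Proof.
  pose proof (is_derive_besselF m z) as Hm; pose proof (is_derive_besselF n z) as Hn.
  pose proof (is_derive_besselF1 m z) as Hm1; pose proof (is_derive_besselF1 n z) as Hn1.
  pose proof (besselF_ode m z) as Om; pose proof (besselF_ode n z) as On.
  unfold sigma_gap; auto_derive; [repeat split; eexists; eassumption|].
  change (fun x => besselF m x) with (besselF m); change (fun x => besselF n x) with (besselF n).
  change (fun x => besselF1 m x) with (besselF1 m); change (fun x => besselF1 n x) with (besselF1 n).
  rewrite (is_derive_unique _ _ _ Hm), (is_derive_unique _ _ _ Hn),
    (is_derive_unique _ _ _ Hm1), (is_derive_unique _ _ _ Hn1).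
  rewrite !S_INR in Om, On; nra.
Qed.

(* For [c = 1] and [x = 2t], [t^(m+n) sigma_gap m n (t^2) = x (J_m' J_n - J_m J_n')], and this
   is the classical identity [(x (J_m' J_n - J_m J_n'))' = (m^2 - n^2) J_m J_n / x]. *)
Lemma is_derive_weighted_sigma_gap m n c t :
  is_derive (fun t => t ^ (m + n) * sigma_gap m n (c * t ^ 2)) t
    ((INR m + INR n) * (INR m - INR n) * t ^ pred (m + n)
     * (besselF m (c * t ^ 2) * besselF n (c * t ^ 2))).
Proof.
  pose proof (is_derive_sigma_gap m n (c * t ^ 2)) as HP.
  auto_derive; [eexists; exact HP|].
  replace (c * (t * (t * 1))) with (c * t ^ 2) by ring.
  change (fun x => sigma_gap m n x) with (sigma_gap m n).
  rewrite (is_derive_unique _ _ _ HP); unfold sigma_gap; rewrite <- plus_INR.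
  set (Fm := besselF m (c * t ^ 2)); set (Fn := besselF n (c * t ^ 2)).
  set (Fm1 := besselF1 m (c * t ^ 2)); set (Fn1 := besselF1 n (c * t ^ 2)).
  destruct (m + n)%nat as [|k]; simpl pred.
  - simpl; ring.
  - change (t ^ S k) with (t * t ^ k); rewrite S_INR; set (p := t ^ k); ring.
Qed.

Lemma sigma_gap_pos m n c t : (n < m)%nat -> 0 < t ->
  (forall u, 0 < u < t -> 0 < besselF m (c * u ^ 2) * besselF n (c * u ^ 2)) ->
  0 < sigma_gap m n (c * t ^ 2).
Proof.
  intros Hmn Ht HF.
  set (Q := fun t => t ^ (m + n) * sigma_gap m n (c * t ^ 2)).
  destruct (MVT_cor2 Q (fun u => (INR m + INR n) * (INR m - INR n) * u ^ pred (m + n)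
      * (besselF m (c * u ^ 2) * besselF n (c * u ^ 2))) 0 t Ht) as [u [HQ Hu]].
  { intros u _; apply is_derive_Reals, is_derive_weighted_sigma_gap. }
  assert (HQ0 : Q 0 = 0) by (unfold Q; rewrite pow_i by lia; ring).
  pose proof (lt_INR _ _ Hmn); pose proof (pos_INR n).
  assert (HQt : 0 < Q t).
  { rewrite HQ0, Rminus_0_r in HQ; rewrite HQ.
    apply Rmult_lt_0_compat; [|lra].
    apply Rmult_lt_0_compat; [|apply HF; lra].
    apply Rmult_lt_0_compat; [nra|apply pow_lt; lra]. }
  unfold Q in HQt; pose proof (pow_lt t (m + n) Ht); nra.
Qed.

Definition besselF_pos_on n W := forall z, 0 <= z < W -> 0 < besselF n z.

Lemma besselF_pos_on_lt m n W : (n < m)%nat -> besselF_pos_on n W -> besselF_pos_on m W.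
Proof.
  intros Hmn Hn z Hz; apply Rnot_le_lt; intro Hmz.
  assert (Hz0 : 0 < z).
  { destruct (Req_dec z 0) as [->|]; [pose proof (besselF_0_pos m)|]; lra. }
  destruct (first_zero (besselF m) 0 z Hz0 (continuity_besselF m) (besselF_0_pos m) Hmz)
    as [z1 [Hz1 [Hm1 Hpos]]].
  assert (Hs : 0 < sqrt z1) by (apply sqrt_lt_R0; lra).
  assert (Hsq : sqrt z1 ^ 2 = z1) by (rewrite <- Rsqr_pow2, Rsqr_sqrt; lra).
  assert (Hgap : 0 < sigma_gap m n (1 * sqrt z1 ^ 2)).
  { apply sigma_gap_pos; [exact Hmn|exact Hs|]; intros u Hu.
    assert (u ^ 2 < z1) by (rewrite <- Hsq; simpl; nra).
    apply Rmult_lt_0_compat; [apply Hpos|apply Hn]; nra. }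
  rewrite Rmult_1_l, Hsq in Hgap; unfold sigma_gap in Hgap; rewrite Hm1 in Hgap.
  assert (Hd : besselF1 m z1 <= 0).
  { apply (is_derive_nonpos_left_min (besselF m) z1 _ z1); [lra|apply is_derive_besselF|].
    intros x Hx; rewrite Hm1; apply Hpos; lra. }
  assert (0 < besselF n z1) by (apply Hn; lra).
  assert (0 <= z1 * - besselF1 m z1 * besselF n z1)
    by (apply Rmult_le_pos; [apply Rmult_le_pos|]; lra).
  lra.
Qed.

Lemma besselF_pos_on_le m n W : (n <= m)%nat -> besselF_pos_on n W -> besselF_pos_on m W.
Proof.
  intros Hnm Hn; destruct (Nat.eq_dec n m) as [<-|]; [exact Hn|].
  apply (besselF_pos_on_lt m n); [lia|exact Hn].
Qed.

Lemma sigma_gap_pos_lt m n W z : (n < m)%nat -> besselF_pos_on n W -> z < W ->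
  0 < sigma_gap m n z.
Proof.
  intros Hmn Hn Hz; pose proof (besselF_pos_on_lt m n W Hmn Hn) as Hm.
  destruct (Rtotal_order z 0) as [Hneg|[->|Hposz]].
  - assert (Hs : 0 < sqrt (- z)) by (apply sqrt_lt_R0; lra).
    replace z with (-1 * sqrt (- z) ^ 2) by (rewrite <- Rsqr_pow2, Rsqr_sqrt; lra).
    apply sigma_gap_pos; [exact Hmn|exact Hs|]; intros u Hu.
    apply Rmult_lt_0_compat; apply besselF_pos_nonpos; nra.
  - unfold sigma_gap; pose proof (lt_INR _ _ Hmn).
    pose proof (besselF_0_pos m); pose proof (besselF_0_pos n).
    assert (0 < besselF m 0 * besselF n 0) by nra; nra.
  - assert (Hs : 0 < sqrt z) by (apply sqrt_lt_R0; lra).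
    assert (Hsq : sqrt z ^ 2 = z) by (rewrite <- Rsqr_pow2, Rsqr_sqrt; lra).
    rewrite <- Hsq, <- (Rmult_1_l (sqrt z ^ 2)).
    apply sigma_gap_pos; [exact Hmn|exact Hs|]; intros u Hu.
    assert (u ^ 2 < z) by (rewrite <- Hsq; simpl; nra).
    apply Rmult_lt_0_compat; [apply Hm|apply Hn]; nra.
Qed.

Lemma besselF_pos_of_pos_on n W z : besselF_pos_on n W -> z < W -> 0 < besselF n z.
Proof.
  intros Hn Hz; destruct (Rle_lt_dec z 0); [apply besselF_pos_nonpos|apply Hn]; lra.
Qed.

Lemma sigma_n_lt m n W L : (n < m)%nat -> besselF_pos_on n W -> L / 4 < W ->
  sigma_n n L < sigma_n m L.
Proof.
  intros Hmn Hn HL.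
  pose proof (besselF_pos_of_pos_on n W _ Hn HL) as HFn.
  pose proof (besselF_pos_of_pos_on m W _ (besselF_pos_on_lt m n W Hmn Hn) HL) as HFm.
  apply Rlt_0_minus; rewrite sigma_n_sub by lra.
  apply Rdiv_lt_0_compat; [apply (sigma_gap_pos_lt m n W); assumption|nra].
Qed.

Lemma besselF_pos_on_first_zero n j : is_first_zero_J n j -> besselF_pos_on n (j ^ 2 / 4).
Proof.
  intros [Hj [_ Hnz]] z Hz; apply Rnot_le_lt; intro Hfz.
  destruct (IVT_cor (besselF n) 0 z (continuity_besselF n) ltac:(lra))
    as [c [Hc Hfc]]; [pose proof (besselF_0_pos n); nra|].
  assert (Hc0 : c <> 0) by (intros ->; pose proof (besselF_0_pos n); lra).
  assert (Hs : 0 < sqrt c) by (apply sqrt_lt_R0; lra).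
  assert (Hsc : sqrt c * sqrt c = c) by (apply sqrt_sqrt; lra).
  apply (Hnz (2 * sqrt c)).
  - split; [lra|]; apply Rnot_le_lt; intro; nra.
  - rewrite BesselJ_besselF; replace ((2 * sqrt c) ^ 2 / 4) with c by (simpl; nra).
    rewrite Hfc; ring.
Qed.

Lemma div2_double_add q r : (r < 2)%nat -> ((2 * q + r) / 2 = q)%nat.
Proof. intro Hr; rewrite Nat.mul_comm, Nat.div_add_l, Nat.div_small; lia. Qed.

Lemma div2_succ_cases k :
  ((S k + 1) / 2 = (k + 1) / 2 \/ (S k + 1) / 2 = S ((k + 1) / 2))%nat.
Proof.
  destruct (Nat.Even_or_Odd k) as [[q ->]|[q ->]].
  - replace (S (2 * q) + 1)%nat with (2 * S q + 0)%nat by lia.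
    rewrite !div2_double_add by lia; auto.
  - replace (S (2 * q + 1) + 1)%nat with (2 * S q + 1)%nat by lia.
    replace (2 * q + 1 + 1)%nat with (2 * S q + 0)%nat by lia.
    rewrite !div2_double_add by lia; auto.
Qed.

(* The [k]-th eigenfunction in the order [1, cos t, sin t, cos 2t, sin 2t, ...]; in its inverse
   [dtn_index], [Nat.pred (2 * 0) = 0] takes care of the constant eigenfunction. *)
Definition dtn_label (k : nat) : nat * bool := ((k + 1) / 2, andb (0 <? k) (Nat.even k))%nat.

Definition dtn_index (l : nat * bool) : nat :=
  if snd l then (2 * fst l)%nat else Nat.pred (2 * fst l).

Lemma dtn_index_label k : dtn_index (dtn_label k) = k.
Proof.
  unfold dtn_index, dtn_label; cbn [fst snd].
  destruct (Nat.Even_or_Odd k) as [[q ->]|[q ->]].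
  - rewrite div2_double_add, Nat.even_even by lia.
    destruct q; reflexivity.
  - replace (2 * q + 1 + 1)%nat with (2 * S q + 0)%nat by lia.
    rewrite div2_double_add, Nat.even_odd, andb_false_r by lia; lia.
Qed.

Lemma dtn_label_index l : dtn_label_valid l -> dtn_label (dtn_index l) = l.
Proof.
  destruct l as [j [|]]; unfold dtn_label_valid, dtn_label, dtn_index; cbn [fst snd]; intro Hv.
  - destruct j as [|j]; [discriminate (Hv eq_refl)|].
    rewrite div2_double_add, Nat.even_even by lia; reflexivity.
  - destruct j as [|j]; [reflexivity|].
    replace (Nat.pred (2 * S j)) with (2 * j + 1)%nat by lia.
    replace (2 * j + 1 + 1)%nat with (2 * S j + 0)%nat by lia.
    rewrite div2_double_add, Nat.even_odd, andb_false_r by lia; reflexivity.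
Qed.

Lemma dtn_label_valid_label k : dtn_label_valid (dtn_label k).
Proof.
  unfold dtn_label_valid, dtn_label; cbn [fst snd]; intro Hk.
  destruct k as [|k]; [reflexivity|]; exfalso.
  rewrite Nat.div_small_iff in Hk; lia.
Qed.

Theorem mainTheorem14 :
  (forall (n m : nat) (jn : R), (n < m)%nat -> is_first_zero_J n jn ->
     forall L : R, L < jn ^ 2 -> sigma_n n L < sigma_n m L) /\
  (forall j0 : R, is_first_zero_J 0 j0 ->
     forall L : R, L < j0 ^ 2 ->
       lists_dtn_eigenvalues L (fun k : nat => sigma_n (Nat.div (k + 1) 2) L)).
Proof.
  split.
  - intros n m jn Hnm Hj L HL.
    apply (sigma_n_lt m n (jn ^ 2 / 4)); [exact Hnm|apply besselF_pos_on_first_zero, Hj|lra].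
  - intros j0 Hj L HL; split.
    + intro k; destruct (div2_succ_cases k) as [-> | ->]; [lra|].
      apply Rlt_le, (sigma_n_lt _ _ (j0 ^ 2 / 4)); [lia| |lra].
      apply (besselF_pos_on_le _ 0); [lia|apply besselF_pos_on_first_zero, Hj].
    + exists dtn_label; split; [|split; [|split]].
      * apply dtn_label_valid_label.
      * intros k1 k2 Hk; rewrite <- (dtn_index_label k1), Hk; apply dtn_index_label.
      * intros l Hl; exists (dtn_index l); apply dtn_label_index, Hl.
      * reflexivity.
Qed.
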